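(* Let $a=a_0+a_1e_1+a_2e_2+a_3e_3$ and $b=b_0+b_1e_1+b_2e_2+b_3e_3$ be nonzero elements of $C\ell_2$ with $H_a=H_b=0$, and let $d\in C\ell_2$. Then the equation $axb=d$ (in the unknown $x\in C\ell_2$) is solvable if and only if $$\frac{aa'db'b}{16(a_0^2+a_3^2)(b_0^2+b_3^2)}=d,$$ and in that case the general solution is $$x=\frac{a'db'}{16(a_0^2+a_3^2)(b_0^2+b_3^2)}+y-\frac{a'aybb'}{16(a_0^2+a_3^2)(b_0^2+b_3^2)},\qquad y\in C\ell_2 \text{ arbitrary}.$$
   Context: $C\ell_2$ is the 4-dimensional real associative algebra with basis $1,e_1,e_2,e_3$ and multiplication $e_1^2=e_2^2=1$, $e_3^2=-1$, $e_1e_2=e_3=-e_2e_1$, $e_1e_3=e_2=-e_3e_1$, $e_3e_2=e_1=-e_2e_3$. For $a=a_0+a_1e_1+a_2e_2+a_3e_3$ ($a_i\in\mathbb{R}$): $a'=a_0+a_1e_1+a_2e_2-a_3e_3$ and $H_a=a_0^2-a_1^2-a_2^2+a_3^2$. *)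

From Stdlib Require Import Reals.
Open Scope R_scope.

(* a = c0 + c1 e1 + c2 e2 + c3 e3 *)
Record cl2 : Type := mkcl2 { c0 : R; c1 : R; c2 : R; c3 : R }.

Definition cl2_zero : cl2 := mkcl2 0 0 0 0.

Definition cl2_add (a b : cl2) : cl2 :=
  mkcl2 (c0 a + c0 b) (c1 a + c1 b) (c2 a + c2 b) (c3 a + c3 b).

Definition cl2_sub (a b : cl2) : cl2 :=
  mkcl2 (c0 a - c0 b) (c1 a - c1 b) (c2 a - c2 b) (c3 a - c3 b).

Definition cl2_scale (r : R) (a : cl2) : cl2 :=
  mkcl2 (r * c0 a) (r * c1 a) (r * c2 a) (r * c3 a).

(* product from e1^2=e2^2=1, e3^2=-1, e1e2=e3=-e2e1, e1e3=e2=-e3e1, e3e2=e1=-e2e3 *)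
Definition cl2_mul (a b : cl2) : cl2 :=
  mkcl2 (c0 a * c0 b + c1 a * c1 b + c2 a * c2 b - c3 a * c3 b)
        (c0 a * c1 b + c1 a * c0 b - c2 a * c3 b + c3 a * c2 b)
        (c0 a * c2 b + c2 a * c0 b + c1 a * c3 b - c3 a * c1 b)
        (c0 a * c3 b + c3 a * c0 b + c1 a * c2 b - c2 a * c1 b).

Definition cl2_prime (a : cl2) : cl2 := mkcl2 (c0 a) (c1 a) (c2 a) (- c3 a).

Definition cl2_H (a : cl2) : R :=
  c0 a ^ 2 - c1 a ^ 2 - c2 a ^ 2 + c3 a ^ 2.

(* When H_a = 0 one has a a' a = 4 (a0^2 + a3^2) a, so a' / (4 (a0^2 + a3^2))
   is an inner (von Neumann) inverse of a, and likewise for b.  Penrose's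
   theorem on a x b = d in an associative ring, for inner inverses g of a and
   h of b, then gives the solvability criterion a g d h b = d and the general
   solution x = g d h + y - g a y b h; the constant 16 (a0^2 + a3^2)
   (b0^2 + b3^2) is the product of the two normalisations. *)

From Pilot Require Import Defs.
From Stdlib Require Import Reals Lra Setoid.
Open Scope R_scope.

Section InnerInverseEquation.

Variables (T : Type) (add sub mul : T -> T -> T).

Hypothesis mul_assoc : forall x y z, mul (mul x y) z = mul x (mul y z).
Hypothesis mul_add_distr_l : forall x y z, mul x (add y z) = add (mul x y) (mul x z).
Hypothesis mul_add_distr_r : forall x y z, mul (add x y) z = add (mul x z) (mul y z).
Hypothesis mul_sub_distr_l : forall x y z, mul x (sub y z) = sub (mul x y) (mul x z).
Hypothesis mul_sub_distr_r : forall x y z, mul (sub x y) z = sub (mul x z) (mul y z).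
Hypothesis add_simpl_l : forall x y, sub (add x y) x = y.
Hypothesis add_simpl_r : forall x y, sub (add x y) y = x.

Variables a b g h : T.
Hypothesis inner_g : mul (mul a g) a = a.
Hypothesis inner_h : mul (mul b h) b = b.

Let inner_g_assoc x : mul a (mul g (mul a x)) = mul a x.
Proof. now rewrite <- mul_assoc, <- mul_assoc, inner_g. Qed.

Let inner_h_assoc : mul b (mul h b) = b.
Proof. now rewrite <- mul_assoc. Qed.

Lemma sandwich_solvable_iff d :
  (exists x, mul (mul a x) b = d) <-> mul (mul (mul (mul a g) d) h) b = d.
Proof.
  split.
  - intros [x <-]. rewrite !mul_assoc, inner_h_assoc. apply inner_g_assoc.
  - intros Hd. exists (mul (mul g d) h). now rewrite !mul_assoc in Hd |- *.
Qed.

Lemma sandwich_solutions d :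
  mul (mul (mul (mul a g) d) h) b = d ->
  forall x, mul (mul a x) b = d <->
    exists y, x = sub (add (mul (mul g d) h) y) (mul (mul (mul g a) (mul y b)) h).
Proof.
  intros Hd x. rewrite !mul_assoc in Hd. split.
  - intros <-. exists x. now rewrite !mul_assoc, add_simpl_l.
  - intros [y ->].
    rewrite mul_sub_distr_l, mul_add_distr_l, mul_sub_distr_r, mul_add_distr_r, !mul_assoc.
    now rewrite Hd, inner_h_assoc, inner_g_assoc, add_simpl_r.
Qed.

End InnerInverseEquation.

Ltac cl2_ring :=
  repeat match goal with x : cl2 |- _ => destruct x end;
  unfold cl2_mul, cl2_scale, cl2_add, cl2_sub, cl2_prime, cl2_H; simpl; f_equal; ring.

Lemma cl2_mul_assoc x y z : cl2_mul (cl2_mul x y) z = cl2_mul x (cl2_mul y z).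
Proof. cl2_ring. Qed.

Lemma cl2_mul_add_distr_l x y z :
  cl2_mul x (cl2_add y z) = cl2_add (cl2_mul x y) (cl2_mul x z).
Proof. cl2_ring. Qed.

Lemma cl2_mul_add_distr_r x y z :
  cl2_mul (cl2_add x y) z = cl2_add (cl2_mul x z) (cl2_mul y z).
Proof. cl2_ring. Qed.

Lemma cl2_mul_sub_distr_l x y z :
  cl2_mul x (cl2_sub y z) = cl2_sub (cl2_mul x y) (cl2_mul x z).
Proof. cl2_ring. Qed.

Lemma cl2_mul_sub_distr_r x y z :
  cl2_mul (cl2_sub x y) z = cl2_sub (cl2_mul x z) (cl2_mul y z).
Proof. cl2_ring. Qed.

Lemma cl2_add_simpl_l x y : cl2_sub (cl2_add x y) x = y.
Proof. cl2_ring. Qed.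

Lemma cl2_add_simpl_r x y : cl2_sub (cl2_add x y) y = x.
Proof. cl2_ring. Qed.

Lemma cl2_mul_scale_l r x y : cl2_mul (cl2_scale r x) y = cl2_scale r (cl2_mul x y).
Proof. cl2_ring. Qed.

Lemma cl2_mul_scale_r r x y : cl2_mul x (cl2_scale r y) = cl2_scale r (cl2_mul x y).
Proof. cl2_ring. Qed.

Lemma cl2_mul_scale_lr r s x y z :
  cl2_mul (cl2_mul (cl2_scale r x) y) (cl2_scale s z)
  = cl2_scale (r * s) (cl2_mul (cl2_mul x y) z).
Proof. cl2_ring. Qed.

(* [Defs.c1] is qualified because Reals exports its own [c1]. *)
Lemma cl2_mul_prime_mul a :
  cl2_mul (cl2_mul a (cl2_prime a)) a
  = cl2_sub (cl2_scale (4 * (c0 a ^ 2 + c3 a ^ 2)) a)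
            (cl2_scale (cl2_H a) (mkcl2 (3 * c0 a) (Defs.c1 a) (c2 a) (3 * c3 a))).
Proof. cl2_ring. Qed.

Lemma cl2_H_eq0_pos a : a <> cl2_zero -> cl2_H a = 0 -> 0 < c0 a ^ 2 + c3 a ^ 2.
Proof.
  destruct a as [a0 a1 a2 a3]; unfold cl2_H, cl2_zero; simpl; intros Ha H.
  destruct (Rle_lt_dec (a0 ^ 2 + a3 ^ 2) 0) as [Hle | Hlt]; [exfalso | exact Hlt].
  assert (a0 = 0) by nra. assert (a3 = 0) by nra.
  assert (a1 = 0) by nra. assert (a2 = 0) by nra.
  subst. now apply Ha.
Qed.

Definition cl2_ginv (a : cl2) : cl2 :=
  cl2_scale (/ (4 * (c0 a ^ 2 + c3 a ^ 2))) (cl2_prime a).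

Lemma cl2_ginv_inner a :
  a <> cl2_zero -> cl2_H a = 0 -> cl2_mul (cl2_mul a (cl2_ginv a)) a = a.
Proof.
  intros Ha H. pose proof (cl2_H_eq0_pos a Ha H) as Hpos.
  unfold cl2_ginv. rewrite cl2_mul_scale_r, cl2_mul_scale_l, cl2_mul_prime_mul, H.
  destruct a; unfold cl2_scale, cl2_sub; simpl in *; f_equal; field; lra.
Qed.

Theorem theorem4p1 (a b d : cl2) :
  a <> cl2_zero -> b <> cl2_zero -> cl2_H a = 0 -> cl2_H b = 0 ->
  let N := 16 * (c0 a ^ 2 + c3 a ^ 2) * (c0 b ^ 2 + c3 b ^ 2) in
  ((exists x : cl2, cl2_mul (cl2_mul a x) b = d) <->
     cl2_scale (/ N)
       (cl2_mul (cl2_mul (cl2_mul (cl2_mul a (cl2_prime a)) d) (cl2_prime b)) b)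
     = d) /\
  (cl2_scale (/ N)
       (cl2_mul (cl2_mul (cl2_mul (cl2_mul a (cl2_prime a)) d) (cl2_prime b)) b)
     = d ->
   forall x : cl2,
     cl2_mul (cl2_mul a x) b = d <->
     exists y : cl2,
       x = cl2_sub
             (cl2_add
                (cl2_scale (/ N) (cl2_mul (cl2_mul (cl2_prime a) d) (cl2_prime b)))
                y)
             (cl2_scale (/ N)
                (cl2_mul (cl2_mul (cl2_mul (cl2_prime a) a) (cl2_mul y b)) (cl2_prime b)))).
Proof.
  intros Ha Hb HHa HHb N.
  pose proof (cl2_H_eq0_pos a Ha HHa) as Pa. pose proof (cl2_H_eq0_pos b Hb HHb) as Pb.
  assert (HN : / N = / (4 * (c0 a ^ 2 + c3 a ^ 2)) * / (4 * (c0 b ^ 2 + c3 b ^ 2)))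
    by (unfold N; field; lra).
  assert (criterion :
    cl2_scale (/ N)
      (cl2_mul (cl2_mul (cl2_mul (cl2_mul a (cl2_prime a)) d) (cl2_prime b)) b)
    = cl2_mul (cl2_mul (cl2_mul (cl2_mul a (cl2_ginv a)) d) (cl2_ginv b)) b)
    by (unfold cl2_ginv; now rewrite (cl2_mul_scale_r _ a), cl2_mul_scale_lr, cl2_mul_scale_l, HN).
  assert (particular :
    cl2_scale (/ N) (cl2_mul (cl2_mul (cl2_prime a) d) (cl2_prime b))
    = cl2_mul (cl2_mul (cl2_ginv a) d) (cl2_ginv b))
    by (unfold cl2_ginv; now rewrite cl2_mul_scale_lr, HN).
  assert (homogeneous : forall y,
    cl2_scale (/ N) (cl2_mul (cl2_mul (cl2_mul (cl2_prime a) a) (cl2_mul y b)) (cl2_prime b))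
    = cl2_mul (cl2_mul (cl2_mul (cl2_ginv a) a) (cl2_mul y b)) (cl2_ginv b))
    by (intro; unfold cl2_ginv; now rewrite cl2_mul_scale_l, cl2_mul_scale_lr, HN).
  rewrite criterion, particular. setoid_rewrite homogeneous.
  pose proof (cl2_ginv_inner a Ha HHa) as inner_a.
  pose proof (cl2_ginv_inner b Hb HHb) as inner_b.
  split.
  - now apply sandwich_solvable_iff; auto using cl2_mul_assoc.
  - apply sandwich_solutions; auto using cl2_mul_assoc, cl2_mul_add_distr_l,
      cl2_mul_add_distr_r, cl2_mul_sub_distr_l, cl2_mul_sub_distr_r,
      cl2_add_simpl_l, cl2_add_simpl_r.
Qed.
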